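(* Fix $\vartheta_1\in(0,\pi/2)$. The function $\Phi$ is increasing on $[\vartheta_1,\pi/2]$, with $\Phi(\vartheta_1)=0$ and $\Phi(\pi/2)=\frac{\pi}{2}(1-\cos\vartheta_1)$.
   Context: For integers $k\ge0$ let $I_k=[\vartheta_1+k\pi,(k+1)\pi-\vartheta_1]$ (so $|\sin\eta|\ge\sin\vartheta_1$ on $I_k$). For $\eta\in I_k$ set $\gamma(\eta)=\sqrt{1-\sin^2\vartheta_1/\sin^2\eta}\in[0,1)$ and $$\Phi(\eta)=-\eta\,\gamma(\eta)+k\pi+\arccos\Big(\frac{\cos(\eta-k\pi)}{\cos\vartheta_1}\Big),\qquad \arccos\in[0,\pi].$$ *)

From Stdlib Require Import Reals.
Open Scope R_scope.

Definition gam (th1 eta : R) : R :=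
  sqrt (1 - (sin th1)^2 / (sin eta)^2).

Definition Phi (th1 : R) (k : nat) (eta : R) : R :=
  - eta * gam th1 eta + INR k * PI + acos (cos (eta - INR k * PI) / cos th1).

(* For k = 0 the arccos term has derivative 1/gam, and gam^2 = 1 - sin^2 th1 / sin^2 eta
   turns Phi' into sin^2 th1 (sin eta - eta cos eta) / (sin^3 eta gam), which is
   positive because tan eta > eta on (0, pi/2].  Phi is continuous at th1, where
   gam vanishes, so the mean value theorem gives strict monotonicity on the
   closed interval.  The endpoint values follow from gam th1 = 0, acos 1 = 0,
   gam (pi/2) = cos th1 and acos 0 = pi/2. *)

From Stdlib Require Import Reals Lra.
From Coquelicot Require Import Coquelicot.
Open Scope R_scope.

Lemma is_derive_acos x : -1 < x < 1 -> is_derive acos x (-1 / sqrt (1 - x²)).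
Proof.
  intros Hx. apply is_derive_Reals.
  apply (derive_pt_eq_1 _ _ _ (derivable_pt_acos _ Hx)), derive_pt_acos.
Qed.

Lemma continuous_acos_pos x : 0 < x -> continuous acos x.
Proof.
  intros Hx.
  apply (continuous_ext_loc _ (fun y => atan (sqrt (1 - y²) / y))).
  - apply (filter_imp (fun y => 0 < y)); [intros y Hy; symmetry; exact (acos_atan y Hy)|].
    exact (open_gt 0 x Hx).
  - apply continuous_atan_comp, (continuous_mult (fun y => sqrt (1 - y²)) Rinv).
    + apply continuous_sqrt_comp, (ex_derive_continuous (fun y : R => 1 - y²)).
      unfold Rsqr. auto_derive. easy.
    + apply (ex_derive_continuous Rinv). auto_derive. lra.
Qed.

Lemma incr_of_derive_pos (f df : R -> R) (a b : R) :
  (forall t, a <= t <= b -> continuous f t) ->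
  (forall t, a < t < b -> is_derive f t (df t)) ->
  (forall t, a < t < b -> 0 < df t) ->
  forall x y, a <= x -> x < y -> y <= b -> f x < f y.
Proof.
  intros Hcont Hder Hpos x y Hax Hxy Hyb.
  assert (Hf : forall t, x < t < y -> derivable_pt_lim f t (df t)).
  { intros t Ht. apply is_derive_Reals, Hder. lra. }
  pose (pr_f t Ht := exist _ (df t) (Hf t Ht) : derivable_pt f t).
  pose (pr_id t (_ : x < t < y) := derivable_pt_id t).
  destruct (MVT f id x y pr_f pr_id Hxy) as (c & Hc & Hmvt).
  - intros t Ht. apply continuity_pt_filterlim, Hcont. lra.
  - intros t _. apply derivable_continuous_pt, derivable_pt_id.
  - rewrite derive_pt_id, (derive_pt_eq_0 _ _ _ _ (Hf c Hc)) in Hmvt.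
    unfold id in Hmvt.
    assert (0 < (y - x) * df c) by (apply Rmult_lt_0_compat; [|apply Hpos]; lra).
    lra.
Qed.

Lemma mul_cos_lt_sin x : 0 < x <= PI / 2 -> x * cos x < sin x.
Proof.
  intros Hx.
  destruct (MVT_cor2 (fun t => sin t - t * cos t) (fun t => t * sin t) 0 x)
    as (c & Hmvt & Hc); [lra | |].
  - intros t _. apply is_derive_Reals. auto_derive; [easy|]. ring.
  - rewrite sin_0, cos_0 in Hmvt.
    assert (0 < c * sin c * (x - 0)); [|lra].
    apply Rmult_lt_0_compat; [apply Rmult_lt_0_compat, sin_gt_0|]; lra.
Qed.

Section First_interval.

Variable th1 : R.
Hypothesis Hth1 : 0 < th1 < PI / 2.

Let sin_th1_pos : 0 < sin th1.
Proof. apply sin_gt_0; lra. Qed.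

Let cos_th1_pos : 0 < cos th1.
Proof. apply cos_gt_0; lra. Qed.

Lemma Phi_0_eq x : Phi th1 0 x = - x * gam th1 x + acos (cos x / cos th1).
Proof. unfold Phi. simpl INR. rewrite Rmult_0_l, Rplus_0_r, Rminus_0_r. reflexivity. Qed.

Lemma sin_th1_lt_sin x : th1 < x <= PI / 2 -> sin th1 < sin x.
Proof. intros Hx. apply sin_increasing_1; lra. Qed.

Lemma cos_nonneg_lt_cos_th1 x : th1 < x <= PI / 2 -> 0 <= cos x < cos th1.
Proof. intros Hx. split; [apply cos_ge_0 | apply cos_decreasing_1]; lra. Qed.

Lemma gam_arg_pos x : th1 < x <= PI / 2 -> 0 < 1 - sin th1 ^ 2 / sin x ^ 2.
Proof.
  intros Hx. pose proof (sin_th1_lt_sin x Hx).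
  assert (sin th1 ^ 2 / sin x ^ 2 < 1); [apply (Rdiv_lt_1 _ (sin x ^ 2)); simpl; nra | lra].
Qed.

Lemma gam_pos x : th1 < x <= PI / 2 -> 0 < gam th1 x.
Proof. intros Hx. apply sqrt_lt_R0, gam_arg_pos, Hx. Qed.

Lemma gam_sqr x : th1 < x <= PI / 2 -> gam th1 x ^ 2 = 1 - sin th1 ^ 2 / sin x ^ 2.
Proof. intros Hx. unfold gam. rewrite pow2_sqrt; [easy|]. pose proof (gam_arg_pos x Hx); lra. Qed.

(* Both sides equal sqrt (sin x ^ 2 - sin th1 ^ 2); this is why the arccos term
   differentiates to 1 / gam. *)
Lemma cos_th1_mul_sqrt x : 0 < sin x ->
  cos th1 * sqrt (1 - (cos x / cos th1)²) = sin x * gam th1 x.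
Proof.
  intros Hs. unfold gam.
  assert (Hc : cos th1 = sqrt (cos th1 ^ 2)) by (rewrite sqrt_pow2; lra).
  assert (HS : sin x = sqrt (sin x ^ 2)) by (rewrite sqrt_pow2; lra).
  rewrite Hc at 1. rewrite HS at 1.
  rewrite <- !sqrt_mult_alt by nra.
  f_equal. pose proof (sin2_cos2 x). pose proof (sin2_cos2 th1). unfold Rsqr in *.
  transitivity (cos th1 ^ 2 - cos x ^ 2); [field; lra|].
  transitivity (sin x ^ 2 - sin th1 ^ 2); [simpl; lra | field; lra].
Qed.

Lemma is_derive_acos_part x : th1 < x <= PI / 2 ->
  is_derive (fun t => acos (cos t / cos th1)) x (/ gam th1 x).
Proof.
  intros Hx. destruct (cos_nonneg_lt_cos_th1 x Hx) as [HC0 HC].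
  pose proof (sin_th1_lt_sin x Hx). pose proof (gam_pos x Hx).
  assert (Hu : -1 < cos x / cos th1 < 1).
  { split; [|apply (Rdiv_lt_1 (cos x) (cos th1)); lra].
    apply (Rlt_le_trans _ 0); [lra | apply Rdiv_le_0_compat; lra]. }
  assert (Hr : 0 < sqrt (1 - (cos x / cos th1)²)).
  { apply sqrt_lt_R0.
    pose proof (Rsqr_bounds_lt 1 (cos x / cos th1) ltac:(lra)) as Hsq.
    rewrite Rsqr_1 in Hsq. lra. }
  replace (/ gam th1 x) with ((- sin x / cos th1) * (-1 / sqrt (1 - (cos x / cos th1)²))).
  - apply (is_derive_comp acos (fun t => cos t / cos th1)).
    + apply is_derive_acos, Hu.
    + auto_derive; [lra | field; lra].
  - replace (- sin x / cos th1 * (-1 / sqrt (1 - (cos x / cos th1)²)))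
      with (sin x / (cos th1 * sqrt (1 - (cos x / cos th1)²))) by (field; lra).
    rewrite cos_th1_mul_sqrt by lra. field. lra.
Qed.

Lemma is_derive_gam_part x : th1 < x <= PI / 2 ->
  is_derive (fun t => - t * gam th1 t) x
    (- gam th1 x - x * (sin th1 ^ 2 * cos x / (sin x ^ 3 * gam th1 x))).
Proof.
  intros Hx. pose proof (sin_th1_lt_sin x Hx). pose proof (gam_arg_pos x Hx).
  assert (Harg : 1 + - (sin th1 * (sin th1 * 1) * / (sin x * (sin x * 1)))
                 = 1 - sin th1 ^ 2 / sin x ^ 2) by (field; lra).
  assert (0 < sqrt (1 - sin th1 ^ 2 / sin x ^ 2)) by (apply sqrt_lt_R0; lra).
  unfold gam. auto_derive; rewrite Harg.
  - repeat split; [apply Rgt_not_eq; nra | lra].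
  - field. lra.
Qed.

Definition Phi_deriv x := sin th1 ^ 2 * (sin x - x * cos x) / (sin x ^ 3 * gam th1 x).

Lemma is_derive_Phi_0 x : th1 < x <= PI / 2 -> is_derive (Phi th1 0) x (Phi_deriv x).
Proof.
  intros Hx. pose proof (sin_th1_lt_sin x Hx). pose proof (gam_pos x Hx).
  apply (is_derive_ext (fun t => - t * gam th1 t + acos (cos t / cos th1))).
  { intros t. symmetry. apply Phi_0_eq. }
  replace (Phi_deriv x) with
    ((- gam th1 x - x * (sin th1 ^ 2 * cos x / (sin x ^ 3 * gam th1 x))) + / gam th1 x).
  - apply (is_derive_plus (fun t => - t * gam th1 t)).
    + apply is_derive_gam_part, Hx.
    + apply is_derive_acos_part, Hx.
  - unfold Phi_deriv.
    transitivity ((1 - gam th1 x ^ 2) / gam th1 x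
                  - x * (sin th1 ^ 2 * cos x / (sin x ^ 3 * gam th1 x))); [field; lra|].
    rewrite gam_sqr by exact Hx.
    field. lra.
Qed.

Lemma Phi_deriv_pos x : th1 < x <= PI / 2 -> 0 < Phi_deriv x.
Proof.
  intros Hx. pose proof (sin_th1_lt_sin x Hx). pose proof (gam_pos x Hx).
  pose proof (mul_cos_lt_sin x ltac:(lra)).
  unfold Phi_deriv. apply Rdiv_lt_0_compat.
  - apply Rmult_lt_0_compat; [apply pow_lt|]; lra.
  - apply Rmult_lt_0_compat; [apply pow_lt|]; lra.
Qed.

(* gam vanishes at th1 and has infinite slope there, so continuity at the left
   endpoint is proved directly. *)
Lemma continuous_Phi_0_th1 : continuous (Phi th1 0) th1.
Proof.
  apply (continuous_ext (fun t => - t * gam th1 t + acos (cos t / cos th1))).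
  { intros t. symmetry. apply Phi_0_eq. }
  apply (continuous_plus (fun t => - t * gam th1 t)).
  - apply (continuous_mult (fun t => - t)).
    { apply (ex_derive_continuous (fun t : R => - t)). auto_derive. easy. }
    apply continuous_sqrt_comp, (ex_derive_continuous (fun t : R => 1 - sin th1 ^ 2 / sin t ^ 2)).
    auto_derive. apply Rgt_not_eq. nra.
  - apply (continuous_comp (fun t => cos t / cos th1) acos).
    + apply (ex_derive_continuous (fun t : R => cos t / cos th1)). auto_derive. lra.
    + apply continuous_acos_pos, Rdiv_lt_0_compat; [apply cos_gt_0|]; lra.
Qed.

Lemma Phi_0_th1 : Phi th1 0 th1 = 0.
Proof.
  rewrite Phi_0_eq. unfold gam.
  replace (1 - sin th1 ^ 2 / sin th1 ^ 2) with 0 by (field; lra).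
  replace (cos th1 / cos th1) with 1 by (field; lra).
  rewrite sqrt_0, acos_1. ring.
Qed.

Lemma Phi_0_PI2 : Phi th1 0 (PI / 2) = PI / 2 * (1 - cos th1).
Proof.
  rewrite Phi_0_eq. unfold gam. rewrite sin_PI2, cos_PI2.
  replace (1 - sin th1 ^ 2 / 1 ^ 2) with (cos th1 ^ 2)
    by (pose proof (sin2_cos2 th1); unfold Rsqr in *; field_simplify; lra).
  replace (0 / cos th1) with 0 by (field; lra).
  rewrite sqrt_pow2, acos_0 by lra. ring.
Qed.

End First_interval.

Theorem lemma5p7 (th1 : R) (Hth1 : 0 < th1 < PI / 2) :
  (forall x y : R, th1 <= x -> x < y -> y <= PI / 2 -> Phi th1 0 x < Phi th1 0 y) /\
  Phi th1 0 th1 = 0 /\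
  Phi th1 0 (PI / 2) = PI / 2 * (1 - cos th1).
Proof.
  split; [|split; [apply Phi_0_th1 | apply Phi_0_PI2]; exact Hth1].
  apply (incr_of_derive_pos _ (Phi_deriv th1)).
  - intros t Ht. destruct (Req_dec t th1) as [-> | Hne].
    + apply continuous_Phi_0_th1, Hth1.
    + apply (ex_derive_continuous (Phi th1 0)).
      exists (Phi_deriv th1 t). apply is_derive_Phi_0; lra.
  - intros t Ht. apply is_derive_Phi_0; lra.
  - intros t Ht. apply Phi_deriv_pos; lra.
Qed.
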